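(* Let $S=\{a_0,a_1,a_2,\ldots\}$ and $T=\{b_0,b_1,b_2,\ldots\}$ be sets of positive integers listed in strictly increasing order ($a_i<a_{i+1}$, $b_i<b_{i+1}$), such that $a_i\geq b_i$ for all $i\geq 0$ (if $S$ is finite, this is required for all indices $i$ for which $a_i$ is defined, and $T$ has at least as many elements). Then for all $n\geq 1$, $$r_S(n)\leq r_T(n).$$
   Context: A partition is a finite nonincreasing sequence of positive integers (its parts); its size is not fixed. The perimeter of a partition with largest part $\alpha$ and $\lambda$ parts is $\alpha+\lambda-1$. For a set $X$ of positive integers, $r_X(n)$ denotes the number of partitions of perimeter $n$ all of whose parts lie in $X$. *)

From mathcomp Require Import all_boot.
Set Implicit Arguments. Unset Strict Implicit. Unset Printing Implicit Defensive.

Definition is_partition (s : seq nat) : bool :=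
  sorted geq s && all (fun x => 0 < x) s.

Definition largest_part (s : seq nat) : nat := foldr maxn 0 s.

Definition perimeter (s : seq nat) : nat := (largest_part s + size s).-1.

Fixpoint all_seqs (len m : nat) : seq (seq nat) :=
  match len with
  | 0 => [:: [::]]
  | l.+1 => [seq x :: s | x <- iota 1 m, s <- all_seqs l m]
  end.

(* Candidate sequences: length 1..n, entries in 1..n.  Every partition of
   perimeter n >= 1 has largest part <= n and at most n parts, so it occurs
   exactly once in this list. *)
Definition candidates (n : nat) : seq (seq nat) :=
  flatten [seq all_seqs len n | len <- iota 1 n].

Definition r (X : pred nat) (n : nat) : nat :=
  count (fun s => [&& is_partition s, all X s & perimeter s == n]) (candidates n).

(* x is the i-th smallest element (0-indexed) of X, i.e. x = a_i *)
Definition is_nth (X : pred nat) (i x : nat) : bool :=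
  X x && (count X (iota 0 x) == i).

From mathcomp Require Import all_boot zify.
Set Implicit Arguments. Unset Strict Implicit. Unset Printing Implicit Defensive.

(* Let g send a_i to b_i; it maps S into T, is increasing and injective, and
   satisfies g a <= a.  Send a partition with parts in S and largest part a to
   the partition of the images of its parts under g, followed by a - g a extra
   copies of the image of its smallest part.  The largest part drops by
   a - g a while the number of parts grows by a - g a, so the perimeter is
   unchanged; and since g is injective, a is recovered from the new largest
   part, hence the number of appended copies and then the original parts. *)

Lemma mem_all_seqs l m s :
  (s \in all_seqs l m) = (size s == l) && all (fun x => 0 < x <= m) s.
Proof.
elim: l s => [|l IH] s /=; first by case: s => [|x s] //=; rewrite inE.
apply/allpairsP/idP.
  case=> -[x t] /= [hx ht ->] /=; move: hx ht; rewrite mem_iota IH.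
  by move=> hx /andP [/eqP -> ->]; rewrite eqxx andbT; lia.
case: s => [|x s] //= /andP [/eqP [hs] /andP [hx hall]]; exists (x, s) => /=.
by rewrite mem_iota IH hs eqxx hall; split => //; lia.
Qed.

Lemma uniq_all_seqs l m : uniq (all_seqs l m).
Proof.
elim: l => [|l IH] //=; apply: allpairs_uniq => //; first exact: iota_uniq.
by move=> [x s] [y t] _ _ /= [-> ->].
Qed.

Lemma mem_candidates n s :
  (s \in candidates n) = (0 < size s <= n) && all (fun x => 0 < x <= n) s.
Proof.
apply/flattenP/idP.
  case=> t /mapP [len]; rewrite mem_iota => hl ->.
  by rewrite mem_all_seqs => /andP [/eqP -> ->]; rewrite andbT; lia.
case/andP => hs ha; exists (all_seqs (size s) n); last by rewrite mem_all_seqs eqxx.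
by apply/mapP; exists (size s) => //; rewrite mem_iota; lia.
Qed.

Lemma uniq_candidates n : uniq (candidates n).
Proof.
rewrite /candidates; elim: n {-2}n 1 => [|j IH] n k //=.
rewrite cat_uniq uniq_all_seqs IH andbT /=.
apply/hasPn => s /flattenP [t /mapP [len]]; rewrite mem_iota => hl ->.
rewrite !mem_all_seqs => /andP [/eqP -> _]; apply/negP => /andP [/eqP hk _]; lia.
Qed.

Lemma sorted_geq_head a s : sorted geq (a :: s) -> all (geq a) s.
Proof. by apply: order_path_min => x y z /= h1 h2; apply: leq_trans h2 h1. Qed.

Lemma largest_part_sorted a s : sorted geq (a :: s) -> largest_part (a :: s) = a.
Proof.
move=> /sorted_geq_head ha; apply/maxn_idPl.
by elim: s ha => //= y s IH /andP [hy hs]; rewrite geq_max hy IH.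
Qed.

Lemma perimeter_sorted a s : sorted geq (a :: s) -> perimeter (a :: s) = a + size s.
Proof. by move=> hs; rewrite /perimeter largest_part_sorted //= addnS. Qed.

Lemma partition_in_candidates n s :
  0 < n -> is_partition s -> perimeter s = n -> s \in candidates n.
Proof.
case: s => [|a s] hn; first by move=> _ /= hp; rewrite -hp in hn.
case/andP => hsort /= /andP [ha0 hpos]; rewrite perimeter_sorted // => hp.
rewrite mem_candidates /= ha0; apply/and3P; split; [lia | lia |].
apply/allP => x hx; rewrite (allP hpos x hx) /=.
by have /= := allP (sorted_geq_head hsort) x hx; lia.
Qed.

Definition restricted_partition (X : pred nat) (n : nat) : pred (seq nat) :=
  fun s => [&& is_partition s, all X s & perimeter s == n].

Lemma count_le_of_inj (A B : eqType) (P : pred A) (Q : pred B)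
    (s : seq A) (t : seq B) (f : A -> B) :
  uniq s -> {in P &, injective f} -> (forall x, P x -> Q (f x) && (f x \in t)) ->
  count P s <= count Q t.
Proof.
move=> us finj fPQ; rewrite -!size_filter -(size_map f).
apply: uniq_leq_size.
  rewrite map_inj_in_uniq ?filter_uniq // => x y.
  by rewrite !mem_filter => /andP [hx _] /andP [hy _]; exact: finj.
move=> _ /mapP [x + ->]; rewrite !mem_filter => /andP [hx _].
exact: fPQ.
Qed.

Lemma r_le_of_inj (S T : pred nat) n (f : seq nat -> seq nat) :
  0 < n -> {in restricted_partition S n &, injective f} ->
  (forall s, restricted_partition S n s -> restricted_partition T n (f s)) ->
  r S n <= r T n.
Proof.
move=> hn finj fST; apply: count_le_of_inj finj _ => [|s /fST hs].
  exact: uniq_candidates.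
apply/andP; split => //; case/and3P: hs => hpart _ /eqP hp.
exact: partition_in_candidates.
Qed.

Definition lower_partition (g : nat -> nat) (s : seq nat) : seq nat :=
  if s is a :: s' then g a :: (map g s' ++ nseq (a - g a) (g (last a s')))
  else [::].

Section LowerPartition.

Variables (S T : pred nat) (g : nat -> nat).
Hypotheses (T_pos : forall x, T x -> 0 < x) (g_T : forall a, S a -> T (g a))
  (g_le : forall a, S a -> g a <= a) (g_homo : {in S &, {homo g : x y / x <= y}})
  (g_inj : {in S &, injective g}).

Lemma lower_partition_parts a s : all S (a :: s) -> all T (lower_partition g (a :: s)).
Proof.
move=> hall; have /allP hS := hall; rewrite /= all_cat all_map all_nseq.
rewrite g_T ?(hS a) ?mem_head //= g_T ?orbT ?andbT ?(hS _ (mem_last a s)) //.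
by apply/allP => x hx; apply: g_T; apply: hS; rewrite inE hx orbT.
Qed.

Lemma lower_partition_sorted a s :
  all S (a :: s) -> sorted geq (a :: s) -> sorted geq (lower_partition g (a :: s)).
Proof.
move=> hall hsort; rewrite /= cat_path -(last_map g).
have -> : path geq (last (g a) (map g s)) (nseq (a - g a) (last (g a) (map g s))).
  by elim: (a - g a) => //= k ->; rewrite leqnn.
case/andP: hall => ha hs; rewrite andbT; apply: (homo_path_in (P := S)) hsort => //.
- by move=> x y hx hy /= hxy; exact: g_homo.
- by rewrite /= ha.
Qed.

Lemma perimeter_lower_partition a s :
  all S (a :: s) -> sorted geq (a :: s) ->
  perimeter (lower_partition g (a :: s)) = perimeter (a :: s).
Proof.
move=> hall hsort; have ha : g a <= a by apply: g_le; case/andP: hall.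
rewrite !perimeter_sorted ?lower_partition_sorted //.
by rewrite size_cat size_map size_nseq; lia.
Qed.

Lemma restricted_lower_partition n s :
  restricted_partition S n s -> restricted_partition T n (lower_partition g s).
Proof.
case: s => [|a s]; first by case/and3P=> _ _ /eqP <-.
case/and3P => /andP [hsort _] hall hp.
have hallT := lower_partition_parts hall.
rewrite /restricted_partition /is_partition perimeter_lower_partition // hp.
rewrite hallT lower_partition_sorted // !andbT.
by apply: sub_all hallT => x /T_pos.
Qed.

Lemma lower_partition_inj n :
  {in restricted_partition S n &, injective (lower_partition g)}.
Proof.
move=> [|a s] [|b t] //; try by move=> _ _ [].
move=> /and3P [_ /andP [ha hs] _] /and3P [_ /andP [hb ht] _] /= [/g_inj eab].
rewrite -{}eab // => e.
have hsz : size s = size t.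
  by move/(congr1 size): e; rewrite !size_cat !size_map !size_nseq => /addIn.
move/(congr1 (take (size s))): e; rewrite take_size_cat ?size_map //.
rewrite hsz take_size_cat ?size_map // => e; congr (_ :: _).
elim: s t hs ht e {hsz} => [|x s IH] [|y t] //= /andP [hx hs] /andP [hy ht].
by case=> /g_inj exy /(IH _ hs ht) ->; rewrite exy.
Qed.

Lemma r_le_of_lowering n : 0 < n -> r S n <= r T n.
Proof.
move=> hn; apply: (r_le_of_inj hn).
  exact: lower_partition_inj.
exact: restricted_lower_partition.
Qed.

End LowerPartition.

Definition rank (X : pred nat) (x : nat) : nat := count X (iota 0 x).

Lemma rank_mono (X : pred nat) : {homo rank X : m k / m <= k}.
Proof. by move=> m k /subnKC <-; rewrite /rank iotaD count_cat leq_addr. Qed.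

Lemma rankS (X : pred nat) x : rank X x.+1 = rank X x + X x.
Proof. by rewrite /rank -addn1 iotaD count_cat /= addn0. Qed.

Lemma is_nth_rank (X : pred nat) x : X x -> is_nth X (rank X x) x.
Proof. by move=> hx; rewrite /is_nth hx eqxx. Qed.

Lemma is_nth_lt (X : pred nat) i j x y : is_nth X i x -> is_nth X j y -> x < y -> i < j.
Proof.
move=> /andP [hx /eqP <-] /andP [_ /eqP <-] /(@rank_mono X).
by rewrite rankS hx addn1.
Qed.

Lemma is_nth_mono (X : pred nat) i j x y :
  is_nth X i x -> is_nth X j y -> i <= j -> x <= y.
Proof.
move=> hx hy hij; rewrite leqNgt; apply/negP => /(is_nth_lt hy hx).
by rewrite ltnNge hij.
Qed.

Lemma is_nth_inj (X : pred nat) i x y : is_nth X i x -> is_nth X i y -> x = y.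
Proof.
by move=> hx hy; apply/anti_leq; rewrite (is_nth_mono hx hy) ?(is_nth_mono hy hx).
Qed.

(* For a = a_i, the search below a + 1 finds the element b_i <= a_i. *)
Definition lower_match (S T : pred nat) (a : nat) : nat :=
  find (is_nth T (rank S a)) (iota 0 a.+1).

Section LowerMatch.

Variables S T : pred nat.
Hypothesis hST : forall i a, is_nth S i a -> exists2 b, is_nth T i b & b <= a.

Lemma lower_match_spec a :
  S a -> is_nth T (rank S a) (lower_match S T a) /\ lower_match S T a <= a.
Proof.
move=> /is_nth_rank /hST [b hb hba].
have hhas : has (is_nth T (rank S a)) (iota 0 a.+1).
  by apply/hasP; exists b => //; rewrite mem_iota.
have := hhas; rewrite has_find size_iota => hlt.
by have := nth_find 0 hhas; rewrite nth_iota // add0n.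
Qed.

Lemma lower_match_homo : {in S &, {homo lower_match S T : x y / x <= y}}.
Proof.
move=> x y hx hy hxy.
have [[hbx _] [hby _]] := (lower_match_spec hx, lower_match_spec hy).
by apply: (is_nth_mono hbx hby); apply: rank_mono.
Qed.

Lemma lower_match_inj : {in S &, injective (lower_match S T)}.
Proof.
move=> x y hx hy e.
have [[hbx _] [hby _]] := (lower_match_spec hx, lower_match_spec hy).
have hrank : rank S x = rank S y.
  by move: hbx hby; rewrite e => /andP [_ /eqP <-] /andP [_ /eqP <-].
by apply: (is_nth_inj (is_nth_rank hx)); rewrite hrank is_nth_rank.
Qed.

End LowerMatch.

Theorem theorem1p3 (S T : pred nat)
  (hS : forall x, S x -> 0 < x) (hT : forall x, T x -> 0 < x)
  (hST : forall i a, is_nth S i a -> exists2 b, is_nth T i b & b <= a) :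
  forall n, 1 <= n -> r S n <= r T n.
Proof.
move=> n hn; apply: (r_le_of_lowering (g := lower_match S T) hT) hn.
- by move=> a /(lower_match_spec hST) [/andP []].
- by move=> a /(lower_match_spec hST) [].
- exact: lower_match_homo.
- exact: lower_match_inj.
Qed.
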